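(* For $\beta=\beta(f_0)$, $f_0>1$, let $\varepsilon(\beta)=\beta^2-\log(4\beta^2)-f_0$. Then $\varepsilon(\beta)=O(\beta^{-2})$ as $\beta\to\infty$.
   Context: Let $f(\phi)=e^\phi-\phi$; for $f_0\ge1$ let $\phi_*(f_0)\le0\le\phi^*(f_0)$ be the two solutions of $f(\phi)=f_0$, and $\beta(f_0)=\frac12\int_{\phi_*(f_0)}^{\phi^*(f_0)}\frac{d\phi}{\sqrt{f_0-f(\phi)}}$. The map $f_0\mapsto\beta(f_0)$ is a smooth increasing bijection from $(1,\infty)$ onto $(\pi/\sqrt2,\infty)$, so $\varepsilon$ is a function of $\beta$. *)

From Stdlib Require Import Reals ClassicalEpsilon.
From Coquelicot Require Import Coquelicot.
Open Scope R_scope.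

Definition f (phi : R) : R := exp phi - phi.

Definition phi_lo (f0 : R) : R :=
  epsilon (inhabits 0) (fun p => p <= 0 /\ f p = f0).

Definition phi_hi (f0 : R) : R :=
  epsilon (inhabits 0) (fun p => 0 <= p /\ f p = f0).

Definition beta (f0 : R) : R :=
  / 2 * RInt_gen (fun phi => / sqrt (f0 - f phi))
                 (at_right (phi_lo f0)) (at_left (phi_hi f0)).

Definition eps_of (f0 : R) : R :=
  beta f0 ^ 2 - ln (4 * beta f0 ^ 2) - f0.

(* Write S = exp p for the positive root p of f = a and split the integral defining 2 beta at 0.
   On [q, 0] one has a - f t = (a + t) - exp t, and exp t is negligible except within O(exp q) of
   q ~ -a, so the left part is 2 sqrt a + O(S^(-3/2)).  On [0, p] one has
   a - f t = S w(t)^2 - (p - t) with w(t) = sqrt (1 - exp (t - p)), and 1 / (sqrt S w) has the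
   explicit primitive (ln (1 - w) - ln (1 + w)) / sqrt S; expanding 1 / sqrt (S w^2 - (p - t))
   to second order gives (p + 2 ln 2) / sqrt S + p^2 / (4 S sqrt S) + O(S^(-3/2)) for the right part.
   Since 2 sqrt a = 2 sqrt (S - p) cancels the p-terms, beta = sqrt S + ln 2 / sqrt S + O(S^(-3/2)),
   whence beta^2 = S + 2 ln 2 + O(1/S) and ln (4 beta^2) = p + 2 ln 2 + O(1/S), i.e.
   eps = O(1/S) = O(beta^(-2)).  A crude bound beta <= (3 + 3 sqrt (1 + a)) / 2 shows that beta
   large forces p large. *)

From Stdlib Require Import Reals Lra Psatz Classical ClassicalEpsilon.
From Coquelicot Require Import Coquelicot.
(* Imported after Coquelicot, whose own [f] would otherwise shadow [Defs.f]. *)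
From Pilot Require Import Defs.
Open Scope R_scope.

Lemma exp_le_exp_compat (x y : R) : x <= y -> exp x <= exp y.
Proof. intros [Hlt | ->]; [left; apply exp_increasing, Hlt | lra]. Qed.

Lemma ln_le_sub1 (x : R) : 0 < x -> ln x <= x - 1.
Proof. intros Hx. pose proof (exp_ineq1_le (ln x)). rewrite exp_ln in H; lra. Qed.

Lemma ln_1p_bounds (r : R) : -1/2 <= r -> -2 * Rabs r <= ln (1 + r) <= r.
Proof.
  intros Hr. split; [|pose proof (ln_le_sub1 (1 + r)); lra].
  assert (Hinv : ln (/ (1 + r)) <= / (1 + r) - 1)
    by (apply ln_le_sub1, Rinv_0_lt_compat; lra).
  rewrite ln_Rinv in Hinv by lra.
  assert (Hquot : / (1 + r) - 1 <= 2 * Rabs r).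
  { apply (Rmult_le_reg_r (1 + r)); [lra|].
    replace ((/ (1 + r) - 1) * (1 + r)) with (- r) by (field; lra).
    destruct (Rle_dec 0 r); [rewrite Rabs_right | rewrite Rabs_left]; nra. }
  lra.
Qed.

Lemma pow5_le_exp (x : R) : 0 <= x -> x ^ 5 / 3125 <= exp x.
Proof.
  intros Hx.
  replace (exp x) with (exp (x / 5) ^ 5)
    by (simpl; rewrite Rmult_1_r, <- !exp_plus; f_equal; field).
  replace (x ^ 5 / 3125) with ((x / 5) ^ 5) by field.
  pose proof (exp_ineq1_le (x / 5)). apply pow_incr. lra.
Qed.

Lemma quartic_le_exp (x : R) : 1000 <= x -> x ^ 4 / 4 <= exp x.
Proof.
  intros Hx. eapply Rle_trans; [|apply pow5_le_exp; lra].
  assert (H4 : 0 <= x ^ 4) by (apply pow_le; lra).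
  replace (x ^ 5) with (x * x ^ 4) by ring. nra.
Qed.

Lemma cube_le_exp (S y : R) : 250000000000 <= S -> S / 4 <= y -> 8 * S ^ 3 <= exp y.
Proof.
  intros HS Hy. eapply Rle_trans; [|apply pow5_le_exp; lra].
  assert (Hy5 : (S / 4) ^ 5 <= y ^ 5) by (apply pow_incr; lra).
  assert (HS2 : 8 * 1024 * 3125 <= S ^ 2) by nra.
  assert (HS3 : 0 <= S ^ 3) by (apply pow_le; lra).
  replace ((S / 4) ^ 5) with (S ^ 3 * S ^ 2 / 1024) in Hy5 by field. nra.
Qed.

Lemma inv_ge_tangent (u v : R) : 0 < u -> 0 < v ->
  / u + (u * u - v * v) / (2 * u ^ 3) <= / v.
Proof.
  intros Hu Hv.
  assert (Hgap : / v - (/ u + (u * u - v * v) / (2 * u ^ 3))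
                 = (u - v) ^ 2 * (2 * u + v) / (2 * u ^ 3 * v)) by (field; lra).
  assert (0 <= (u - v) ^ 2 * (2 * u + v) / (2 * u ^ 3 * v)).
  { assert (0 < u ^ 3) by (apply pow_lt; lra).
    apply Rmult_le_pos; [apply Rmult_le_pos; [apply pow2_ge_0|lra]|].
    left; apply Rinv_0_lt_compat; nra. }
  lra.
Qed.

Lemma inv_sub_inv_le (u v : R) : 0 < v -> v <= u -> / v - / u <= (u * u - v * v) / (2 * v ^ 3).
Proof.
  intros Hv Hvu.
  assert (Hgap : (u * u - v * v) / (2 * v ^ 3) - (/ v - / u)
                 = (u - v) * (u * (u + v) - 2 * v * v) / (2 * v ^ 3 * u)) by (field; lra).
  assert (0 <= (u - v) * (u * (u + v) - 2 * v * v) / (2 * v ^ 3 * u)).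
  { assert (0 < v ^ 3) by (apply pow_lt; lra).
    apply Rmult_le_pos; [apply Rmult_le_pos; nra|].
    left; apply Rinv_0_lt_compat; nra. }
  lra.
Qed.

Lemma inv_le_second_order (u v z : R) : 0 < u -> 0 < v -> 0 <= z <= 1/2 ->
  v * v = u * u * (1 - z) -> / v <= / u * (1 + z / 2 + z * z).
Proof.
  intros Hu Hv Hz Hvv.
  assert (Hpoly : 1 <= (1 - z) * (1 + z / 2 + z * z) ^ 2).
  { replace ((1 - z) * (1 + z / 2 + z * z) ^ 2)
      with (1 + z * z * (5/4 - 5/4 * z - z * z * z)) by field.
    assert (0 <= z * z * (5/4 - 5/4 * z - z * z * z)) by (apply Rmult_le_pos; nra). lra. }
  assert (Huv : u <= v * (1 + z / 2 + z * z)).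
  { apply Rsqr_incr_0_var; [|nra]. unfold Rsqr.
    replace (v * (1 + z / 2 + z * z) * (v * (1 + z / 2 + z * z)))
      with (v * v * (1 + z / 2 + z * z) ^ 2) by ring.
    rewrite Hvv. nra. }
  apply (Rmult_le_reg_l v); [lra|]. rewrite Rinv_r by lra.
  apply (Rmult_le_reg_l u); [lra|].
  replace (u * (v * (/ u * (1 + z / 2 + z * z)))) with (v * (1 + z / 2 + z * z)) by (field; lra).
  lra.
Qed.

Lemma sqrt_sub_expansion (s x : R) : 0 < s -> 0 <= x <= s ^ 2 / 2 ->
  2 * s - x / s - x ^ 2 / (4 * s ^ 3) - x ^ 3 / (4 * s ^ 5) <= 2 * sqrt (s ^ 2 - x) <=
  2 * s - x / s - x ^ 2 / (4 * s ^ 3).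
Proof.
  intros Hs Hx.
  set (u := x / s ^ 2).
  assert (Hs2 : 0 < s ^ 2) by (apply pow_lt; lra).
  assert (Hu : 0 <= u <= 1/2).
  { unfold u. split; [apply Rmult_le_pos; [lra|left; apply Rinv_0_lt_compat; lra]|].
    apply (Rmult_le_reg_r (s ^ 2)); [lra|]. field_simplify; lra. }
  replace x with (u * s ^ 2) by (unfold u; field; lra).
  set (r := sqrt (s ^ 2 - u * s ^ 2)).
  assert (Hr : 0 <= r) by apply sqrt_pos.
  assert (Hr2 : r * r = s * s * (1 - u)) by (unfold r; rewrite sqrt_sqrt; nra).
  replace (2 * s - u * s ^ 2 / s - (u * s ^ 2) ^ 2 / (4 * s ^ 3) - (u * s ^ 2) ^ 3 / (4 * s ^ 5))
    with (2 * (s * (1 - u / 2 - u * u / 8 - u * u * u / 8))) by (field; lra).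
  replace (2 * s - u * s ^ 2 / s - (u * s ^ 2) ^ 2 / (4 * s ^ 3))
    with (2 * (s * (1 - u / 2 - u * u / 8))) by (field; lra).
  assert (Hu2 : 0 <= u * u) by nra. assert (Hu3 : 0 <= u * u * u) by nra.
  split; apply Rmult_le_compat_l; try lra; apply Rsqr_incr_0_var; unfold Rsqr.
  - replace (s * (1 - u / 2 - u * u / 8 - u * u * u / 8) * (s * (1 - u / 2 - u * u / 8 - u * u * u / 8)))
      with (s * s * (1 - u - u * u * u * (1/8 - 9/64 * u - 1/32 * u * u - 1/64 * u * u * u))) by field.
    rewrite Hr2. apply Rmult_le_compat_l; [nra|].
    assert (0 <= u * u * u * (1/8 - 9/64 * u - 1/32 * u * u - 1/64 * u * u * u))
      by (apply Rmult_le_pos; nra).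
    lra.
  - exact Hr.
  - replace (s * (1 - u / 2 - u * u / 8) * (s * (1 - u / 2 - u * u / 8)))
      with (s * s * (1 - u + u * u * u / 8 + u * u * u * u / 64)) by field.
    rewrite Hr2. apply Rmult_le_compat_l; nra.
  - nra.
Qed.

Lemma ln2_bounds : / 2 < ln 2 <= 1.
Proof. split; [apply ln_lt_2|pose proof (ln_le_sub1 2); lra]. Qed.

Lemma sq_expansion (s e : R) : 1000 <= s -> Rabs e <= 19 ->
  Rabs ((s + ln 2 / s + e / s ^ 3) ^ 2 - s ^ 2 - 2 * ln 2) <= 41 / s ^ 2.
Proof.
  intros Hs He. pose proof ln2_bounds as HL. set (L := ln 2) in *.
  set (u := / s ^ 2).
  assert (Hu : 0 < u <= / 1000000).
  { unfold u. split; [apply Rinv_0_lt_compat, pow_lt; lra|].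
    apply Rinv_le_contravar; [lra|nra]. }
  replace ((s + L / s + e / s ^ 3) ^ 2 - s ^ 2 - 2 * L)
    with (u * (L * L + 2 * e + 2 * L * e * u + e * e * (u * u))) by (unfold u; field; lra).
  replace (41 / s ^ 2) with (u * 41) by (unfold u; field; lra).
  apply Rabs_le_between in He.
  rewrite Rabs_mult, (Rabs_right u) by lra. apply Rmult_le_compat_l; [lra|].
  apply Rabs_le. assert (Hu1 : u <= / 1000000) by lra.
  assert (HLe : Rabs (2 * L * e * u) <= 1).
  { assert (HLe : - 19 <= L * e <= 19) by (split; nra).
    apply Rabs_le. split; nra. }
  apply Rabs_le_between in HLe.
  assert (0 <= e * e * (u * u) <= 1) by (split; nra).
  split; nra.
Qed.

Lemma eps_expansion_bound (s b : R) : 1000 <= s ->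
  Rabs (b - (s + ln 2 / s)) <= 19 / s ^ 3 ->
  Rabs (b ^ 2 - ln (4 * b ^ 2) - (s ^ 2 - ln (s ^ 2))) <= 100 / b ^ 2.
Proof.
  intros Hs Hb. pose proof ln2_bounds as HL.
  assert (Hs2 : 1000000 <= s ^ 2) by nra.
  assert (Hs3 : 0 < s ^ 3) by (apply pow_lt; lra).
  set (e := (b - (s + ln 2 / s)) * s ^ 3).
  assert (Hbe : b = s + ln 2 / s + e / s ^ 3) by (unfold e; field; lra).
  assert (He : Rabs e <= 19).
  { unfold e. rewrite Rabs_mult, (Rabs_right (s ^ 3)) by lra.
    apply (Rmult_le_compat_r (s ^ 3)) in Hb; [|lra].
    replace (19 / s ^ 3 * s ^ 3) with 19 in Hb by (field; lra). exact Hb. }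
  pose proof (sq_expansion s e Hs He) as HD. rewrite <- Hbe in HD.
  set (D := b ^ 2 - s ^ 2 - 2 * ln 2) in HD.
  apply Rabs_le_between in HD.
  assert (H41 : 41 / s ^ 2 <= 1) by (apply (Rmult_le_reg_r (s ^ 2)); [lra|]; field_simplify; lra).
  set (rho := (2 * ln 2 + D) / s ^ 2).
  assert (Hrho : b ^ 2 = s ^ 2 * (1 + rho)) by (unfold rho, D; field; lra).
  assert (Hrho_abs : Rabs rho <= 3 / s ^ 2).
  { unfold rho. rewrite Rabs_div by lra. rewrite (Rabs_right (s ^ 2)) by lra.
    unfold Rdiv. apply Rmult_le_compat_r; [left; apply Rinv_0_lt_compat; lra|].
    apply Rabs_le; lra. }
  assert (H3 : 3 / s ^ 2 <= 1/2) by (apply (Rmult_le_reg_r (s ^ 2)); [lra|]; field_simplify; lra).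
  apply Rabs_le_between in Hrho_abs as Hrho_bt.
  destruct (ln_1p_bounds rho ltac:(lra)) as [Hln1 Hln2].
  assert (Hln : ln (4 * b ^ 2) = 2 * ln 2 + ln (s ^ 2) + ln (1 + rho)).
  { rewrite Hrho, !ln_mult by nra. replace 4 with (2 * 2) by ring. rewrite ln_mult; lra. }
  replace (b ^ 2 - ln (4 * b ^ 2) - (s ^ 2 - ln (s ^ 2))) with (D - ln (1 + rho))
    by (rewrite Hln; unfold D; ring).
  assert (Hb2 : 0 < b ^ 2 <= 2 * s ^ 2) by (unfold D in HD; lra).
  assert (Hfinal : 47 / s ^ 2 <= 100 / b ^ 2).
  { apply (Rmult_le_reg_r (s ^ 2 * b ^ 2)); [nra|].
    replace (47 / s ^ 2 * (s ^ 2 * b ^ 2)) with (47 * b ^ 2) by (field; repeat split; nra).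
    replace (100 / b ^ 2 * (s ^ 2 * b ^ 2)) with (100 * s ^ 2) by (field; repeat split; nra). lra. }
  apply Rabs_le. unfold Rdiv in *. lra.
Qed.

Lemma inv_sqrt_sub_lower (W X s v : R) : 0 < W <= 1 -> 0 <= X -> 0 < s -> 0 < v ->
  v * v = s ^ 2 * (W * W) - X -> / s * / W + X / (2 * s ^ 3) <= / v.
Proof.
  intros HW HX Hs Hv Hvv.
  assert (Hu : 0 < s * W) by nra.
  pose proof (inv_ge_tangent (s * W) v Hu Hv) as Htan.
  replace (/ (s * W)) with (/ s * / W) in Htan by (field; lra).
  replace (s * W * (s * W) - v * v) with X in Htan by (rewrite Hvv; ring).
  enough (X / (2 * s ^ 3) <= X / (2 * (s * W) ^ 3)) by lra.
  apply Rmult_le_compat_l; [lra|]. apply Rinv_le_contravar; [apply Rmult_lt_0_compat, pow_lt; lra|].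
  rewrite Rpow_mult_distr. apply Rmult_le_compat_l; [lra|].
  assert (0 < s ^ 3) by (apply pow_lt; lra).
  assert (W ^ 3 <= 1) by (replace 1 with (1 ^ 3) by ring; apply pow_incr; lra). nra.
Qed.

Lemma inv_sqrt_sub_upper (W X E s v P : R) : 0 < W <= 1 -> W * W + E = 1 -> 0 <= X -> 0 < s ->
  X <= (1 + X) * (W * W) -> X <= P -> 0 < v -> v * v = s ^ 2 * (W * W) - X ->
  2 * (1 + P) <= s ^ 2 ->
  / v <= (/ s + (1 + P) ^ 2 / s ^ 5) * / W + / (2 * s ^ 3) * (X + X * E / W + X * E / W ^ 3).
Proof.
  intros HW HWE HX Hs HXW HXP Hv Hvv HP.
  assert (Hs2 : 0 < s ^ 2) by (apply pow_lt; lra).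
  assert (HW2 : 0 < W * W) by nra.
  set (z := X / (s ^ 2 * (W * W))).
  assert (Hz : 0 <= z <= 1/2).
  { unfold z. split; [apply Rmult_le_pos; [lra|left; apply Rinv_0_lt_compat; nra]|].
    apply (Rmult_le_reg_r (s ^ 2 * (W * W))); [nra|].
    replace (X / (s ^ 2 * (W * W)) * (s ^ 2 * (W * W))) with X by (field; lra).
    assert ((1 + X) * (W * W) <= (1 + P) * (W * W)) by nra.
    assert ((1 + P) * (W * W) <= s ^ 2 / 2 * (W * W)) by nra. lra. }
  assert (Hvz : v * v = (s * W) * (s * W) * (1 - z)) by (rewrite Hvv; unfold z; field; lra).
  eapply Rle_trans; [apply (inv_le_second_order (s * W) v z); nra|].
  replace (/ (s * W) * (1 + z / 2 + z * z))
    with (/ s * / W + / (2 * s ^ 3) * (X * / W ^ 3) + / s ^ 5 * (X ^ 2 * / W ^ 5))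
    by (unfold z; field; lra).
  assert (Hcube : X * / W ^ 3 <= X + X * E / W + X * E / W ^ 3).
  { replace E with (1 - W * W) by lra.
    assert (X * (1 - W) / W <= X * (1 - W * W) / W).
    { apply Rmult_le_compat_r; [left; apply Rinv_0_lt_compat; lra|]. apply Rmult_le_compat_l; nra. }
    replace (X * / W ^ 3) with (X + X * (1 - W) / W + X * (1 - W * W) / W ^ 3) by (field; lra).
    lra. }
  assert (Hfifth : X ^ 2 * / W ^ 5 <= (1 + P) ^ 2 * / W).
  { assert (X ^ 2 <= ((1 + P) * (W * W)) ^ 2) by (apply pow_incr; nra).
    replace (X ^ 2 * / W ^ 5) with (X ^ 2 / W ^ 4 * / W) by (field; lra).
    apply Rmult_le_compat_r; [left; apply Rinv_0_lt_compat; lra|].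
    apply (Rmult_le_reg_r (W ^ 4)); [apply pow_lt; lra|].
    replace (X ^ 2 / W ^ 4 * W ^ 4) with (X ^ 2) by (field; lra).
    replace ((1 + P) ^ 2 * W ^ 4) with (((1 + P) * (W * W)) ^ 2) by ring. lra. }
  assert (0 < / (2 * s ^ 3)) by (apply Rinv_0_lt_compat, Rmult_lt_0_compat, pow_lt; lra).
  assert (0 < / s ^ 5) by (apply Rinv_0_lt_compat, pow_lt; lra).
  apply Rmult_le_compat_l with (r := / (2 * s ^ 3)) in Hcube; [|lra].
  apply Rmult_le_compat_l with (r := / s ^ 5) in Hfifth; [|lra].
  replace ((/ s + (1 + P) ^ 2 / s ^ 5) * / W) with (/ s * / W + / s ^ 5 * ((1 + P) ^ 2 * / W))
    by (field; lra).
  lra.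
Qed.

Lemma le_of_derive_nonneg (D d : R -> R) (x y : R) : x <= y ->
  (forall t, x <= t <= y -> is_derive D t (d t)) ->
  (forall t, x <= t <= y -> 0 <= d t) -> D x <= D y.
Proof.
  intros Hxy HD Hd.
  destruct (MVT_gen D x y d) as [c [Hc Heq]];
    rewrite ?Rmin_left, ?Rmax_right in * by lra.
  - intros t Ht. apply HD; lra.
  - intros t Ht. apply continuity_pt_filterlim, (@ex_derive_continuous R_AbsRing R_NormedModule).
    eexists. apply HD; lra.
  - assert (0 <= d c * (y - x)) by (apply Rmult_le_pos; [apply Hd|]; lra). lra.
Qed.

Lemma is_derive_sqrt_sub (c K t : R) : c < t -> 0 < K ->
  is_derive (fun u => 2 * sqrt (u - c) / K) t (/ sqrt ((t - c) * (K * K))).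
Proof.
  intros Ht HK. auto_derive; [lra|]. change (t + - c) with (t - c).
  rewrite sqrt_mult, sqrt_square by nra.
  assert (0 < sqrt (t - c)) by (apply sqrt_lt_R0; lra). field. lra.
Qed.

Lemma is_derive_sqrt_sub' (c K t : R) : t < c -> 0 < K ->
  is_derive (fun u => - (2 * sqrt (c - u) / K)) t (/ sqrt ((c - t) * (K * K))).
Proof.
  intros Ht HK. auto_derive; [lra|]. change (c + - t) with (c - t).
  rewrite sqrt_mult, sqrt_square by nra.
  assert (0 < sqrt (c - t)) by (apply sqrt_lt_R0; lra). field. lra.
Qed.

Lemma is_derive_scal_id (K t : R) : is_derive (fun u => u * K) t K.
Proof. auto_derive; auto. ring. Qed.

Section InnerIntegrals.

Variables (lo hi : R) (g : R -> R).
Hypothesis lo_lt_hi : lo < hi.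
Hypothesis g_cont : forall t, lo < t < hi -> continuous g t.
Hypothesis g_nonneg : forall t, lo < t < hi -> 0 <= g t.

Lemma ex_RInt_inner (x y : R) : lo < x < hi -> lo < y < hi -> ex_RInt g x y.
Proof.
  intros Hx Hy. apply (@ex_RInt_continuous R_CompleteNormedModule).
  intros z Hz. apply g_cont.
  destruct (Rle_dec x y); [rewrite Rmin_left, Rmax_right in Hz | rewrite Rmin_right, Rmax_left in Hz];
    lra.
Qed.

Lemma is_derive_RInt_inner (x t : R) : lo < x < hi -> lo < t < hi ->
  is_derive (RInt g x) t (g t).
Proof.
  intros Hx Ht. apply (@is_derive_RInt R_NormedModule g (RInt g x) x t); [|apply g_cont, Ht].
  assert (Hd : 0 < Rmin (t - lo) (hi - t)) by (apply Rmin_pos; lra).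
  exists (mkposreal _ Hd). intros b Hb.
  change (Rabs (b - t) < Rmin (t - lo) (hi - t)) in Hb. apply Rabs_lt_between' in Hb.
  pose proof (Rmin_l (t - lo) (hi - t)). pose proof (Rmin_r (t - lo) (hi - t)).
  apply (@RInt_correct R_CompleteNormedModule), ex_RInt_inner; lra.
Qed.

Lemma RInt_le_of_derive (x y : R) (G h : R -> R) : lo < x -> x <= y -> y < hi ->
  (forall t, x <= t <= y -> is_derive G t (h t)) ->
  (forall t, x <= t <= y -> g t <= h t) ->
  RInt g x y <= G y - G x.
Proof.
  intros Hx Hxy Hy HG Hgh.
  assert (Hmono : G x - RInt g x x <= G y - RInt g x y).
  { apply (le_of_derive_nonneg (fun u => G u - RInt g x u) (fun t => h t - g t)); [lra| |].
    - intros t Ht. apply (@is_derive_minus R_AbsRing R_NormedModule); [apply HG, Ht|].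
      apply is_derive_RInt_inner; lra.
    - intros t Ht. pose proof (Hgh t Ht). lra. }
  rewrite RInt_point in Hmono. change zero with 0 in Hmono. lra.
Qed.

Lemma RInt_ge_of_derive (x y : R) (G h : R -> R) : lo < x -> x <= y -> y < hi ->
  (forall t, x <= t <= y -> is_derive G t (h t)) ->
  (forall t, x <= t <= y -> h t <= g t) ->
  G y - G x <= RInt g x y.
Proof.
  intros Hx Hxy Hy HG Hhg.
  assert (Hmono : RInt g x x - G x <= RInt g x y - G y).
  { apply (le_of_derive_nonneg (fun u => RInt g x u - G u) (fun t => g t - h t)); [lra| |].
    - intros t Ht. apply (@is_derive_minus R_AbsRing R_NormedModule); [|apply HG, Ht].
      apply is_derive_RInt_inner; lra.
    - intros t Ht. pose proof (Hhg t Ht). lra. }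
  rewrite RInt_point in Hmono. change zero with 0 in Hmono. lra.
Qed.

Lemma RInt_inner_Chasles (x y z : R) : lo < x -> x <= y -> y <= z -> z < hi ->
  RInt g x z = RInt g x y + RInt g y z.
Proof.
  intros Hx Hxy Hyz Hz. symmetry.
  apply (@RInt_Chasles R_CompleteNormedModule); apply ex_RInt_inner; lra.
Qed.

Lemma RInt_inner_nonneg (x y : R) : lo < x -> x <= y -> y < hi -> 0 <= RInt g x y.
Proof.
  intros Hx Hxy Hy. apply RInt_ge_0; [lra|apply ex_RInt_inner; lra|].
  intros t Ht. apply g_nonneg. lra.
Qed.

Lemma RInt_inner_mono (x' x y y' : R) : lo < x' -> x' <= x -> x <= y -> y <= y' -> y' < hi ->
  RInt g x y <= RInt g x' y'.
Proof.
  intros H1 H2 H3 H4 H5.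
  rewrite (RInt_inner_Chasles x' x y'), (RInt_inner_Chasles x y y') by lra.
  pose proof (RInt_inner_nonneg x' x). pose proof (RInt_inner_nonneg y y'). lra.
Qed.

Definition inner_bound (M : R) : Prop :=
  forall x y, lo < x -> x <= y -> y < hi -> RInt g x y <= M.

Lemma is_RInt_gen_sup (M : R) : inner_bound M ->
  exists l, is_RInt_gen g (at_right lo) (at_left hi) l /\
    inner_bound l /\ (forall U, inner_bound U -> l <= U).
Proof.
  intros HM.
  set (E := fun v => exists x y, lo < x /\ x <= y /\ y < hi /\ v = RInt g x y).
  destruct (completeness E) as [l [Hub Hlub]].
  - exists M. intros v (x & y & H1 & H2 & H3 & ->). apply HM; auto.
  - exists (RInt g ((lo + hi) / 2) ((lo + hi) / 2)).
    exists ((lo + hi) / 2), ((lo + hi) / 2). repeat split; lra.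
  - assert (Hl : inner_bound l).
    { intros x y H1 H2 H3. apply Hub. exists x, y. repeat split; auto. }
    exists l. split; [|split; [exact Hl|]].
    + intros P [eps Heps].
      assert (Hex : exists x0 y0, lo < x0 /\ x0 <= y0 /\ y0 < hi /\ l - eps < RInt g x0 y0).
      { apply NNPP. intros Hn.
        assert (l <= l - eps); [|pose proof (cond_pos eps); lra].
        apply Hlub. intros v (x & y & H1 & H2 & H3 & ->).
        apply Rnot_lt_le. intros Hlt. apply Hn. exists x, y. repeat split; auto. }
      destruct Hex as (x0 & y0 & H1 & H2 & H3 & H4).
      apply (Filter_prod _ _ _ (fun x => lo < x <= x0) (fun y => y0 <= y < hi)).
      * assert (Hd : 0 < x0 - lo) by lra. exists (mkposreal _ Hd).
        intros u Hu Hlu. change (Rabs (u - lo) < x0 - lo) in Hu.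
        apply Rabs_lt_between' in Hu. lra.
      * assert (Hd : 0 < hi - y0) by lra. exists (mkposreal _ Hd).
        intros u Hu Hhu. change (Rabs (u - hi) < hi - y0) in Hu.
        apply Rabs_lt_between' in Hu. lra.
      * intros x y [Hx1 Hx2] [Hy1 Hy2]. exists (RInt g x y). split.
        -- apply (@RInt_correct R_CompleteNormedModule), ex_RInt_inner; lra.
        -- apply Heps. change (Rabs (RInt g x y - l) < eps).
           pose proof (Hl x y ltac:(lra) ltac:(lra) ltac:(lra)).
           pose proof (RInt_inner_mono x x0 y0 y ltac:(lra) ltac:(lra) ltac:(lra) ltac:(lra) ltac:(lra)).
           apply Rabs_lt_between'. lra.
    + intros U HU. apply Hlub. intros v (x & y & H1 & H2 & H3 & ->). apply HU; auto.
Qed.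

Lemma RInt_le_RInt_gen (M x y : R) : inner_bound M -> lo < x -> x <= y -> y < hi ->
  RInt g x y <= RInt_gen g (at_right lo) (at_left hi).
Proof.
  intros HM Hx Hxy Hy. destruct (is_RInt_gen_sup M HM) as (l & Hgen & Hl & _).
  rewrite (is_RInt_gen_unique g l Hgen). apply Hl; auto.
Qed.

Lemma RInt_gen_le (U : R) : inner_bound U -> RInt_gen g (at_right lo) (at_left hi) <= U.
Proof.
  intros HU. destruct (is_RInt_gen_sup U HU) as (l & Hgen & _ & Hlub).
  rewrite (is_RInt_gen_unique g l Hgen). apply Hlub, HU.
Qed.

End InnerIntegrals.

Lemma f_antitone_neg (x y : R) : x <= y <= 0 -> f y <= f x.
Proof.
  intros Hxy. unfold f.
  replace (exp x) with (exp y * exp (x - y)) by (rewrite <- exp_plus; f_equal; ring).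
  pose proof (exp_ineq1_le (x - y)). pose proof (exp_pos y).
  assert (exp y <= 1) by (rewrite <- exp_0; apply exp_le_exp_compat; lra). nra.
Qed.

Lemma f_monotone_pos (x y : R) : 0 <= x <= y -> f x <= f y.
Proof.
  intros Hxy. unfold f.
  replace (exp y) with (exp x * exp (y - x)) by (rewrite <- exp_plus; f_equal; ring).
  pose proof (exp_ineq1_le (y - x)). pose proof (exp_pos x).
  assert (1 <= exp x) by (rewrite <- exp_0; apply exp_le_exp_compat; lra). nra.
Qed.

Lemma sqrt_div_sqrt_le (u c k : R) : 0 < c -> 0 <= u -> u <= k * c -> sqrt u / sqrt c <= sqrt k.
Proof.
  intros Hc Hu Huk. assert (0 < sqrt c) by (apply sqrt_lt_R0, Hc).
  apply (Rmult_le_reg_r (sqrt c)); [lra|].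
  replace (sqrt u / sqrt c * sqrt c) with (sqrt u) by (field; lra).
  rewrite <- sqrt_mult_alt by nra.
  apply sqrt_le_1_alt, Huk.
Qed.

Section Roots.

Variables a p q : R.
Hypothesis Ha : 1 < a.
Hypothesis Hp : 0 < p.
Hypothesis Hq : q < 0.
Hypothesis Hfp : exp p - p = a.
Hypothesis Hfq : exp q - q = a.

Let g (t : R) : R := / sqrt (a - f t).

Lemma a_sub_f_ge_left (t : R) : q <= t -> (t - q) * (1 - exp t) <= a - f t.
Proof.
  intros Ht. unfold f.
  replace (exp q) with (exp t * exp (q - t)) in Hfq by (rewrite <- exp_plus; f_equal; ring).
  pose proof (exp_ineq1_le (q - t)). pose proof (exp_pos t). nra.
Qed.

Lemma a_sub_f_ge_right (t : R) : t <= p -> (p - t) * (exp t - 1) <= a - f t.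
Proof.
  intros Ht. unfold f.
  replace (exp p) with (exp t * exp (p - t)) in Hfp by (rewrite <- exp_plus; f_equal; ring).
  pose proof (exp_ineq1_le (p - t)). pose proof (exp_pos t). nra.
Qed.

Lemma a_sub_f_pos (t : R) : q < t < p -> 0 < a - f t.
Proof.
  intros Ht. destruct (Rtotal_order t 0) as [Hneg | [-> | Hpos]].
  - pose proof (a_sub_f_ge_left t ltac:(lra)).
    assert (exp t < 1) by (rewrite <- exp_0; apply exp_increasing; lra). nra.
  - unfold f. rewrite exp_0. lra.
  - pose proof (a_sub_f_ge_right t ltac:(lra)).
    assert (1 < exp t) by (rewrite <- exp_0; apply exp_increasing; lra). nra.
Qed.

Lemma g_cont (t : R) : q < t < p -> continuous g t.
Proof.
  intros Ht. pose proof (a_sub_f_pos t Ht).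
  apply (@ex_derive_continuous R_AbsRing R_NormedModule). unfold g, f in *.
  auto_derive. repeat split; try lra. apply Rgt_not_eq, sqrt_lt_R0; lra.
Qed.

Lemma g_nonneg (t : R) : q < t < p -> 0 <= g t.
Proof.
  intros Ht. left. apply Rinv_0_lt_compat, sqrt_lt_R0, a_sub_f_pos, Ht.
Qed.

Lemma g_le_inv_sqrt (t L : R) : 0 < L -> L <= a - f t -> g t <= / sqrt L.
Proof. intros HL HLt. apply Rinv_le_contravar; [apply sqrt_lt_R0|apply sqrt_le_1_alt]; lra. Qed.

Lemma inv_sqrt_le_g (t L : R) : 0 < a - f t -> a - f t <= L -> / sqrt L <= g t.
Proof. intros HL HLt. apply Rinv_le_contravar; [apply sqrt_lt_R0|apply sqrt_le_1_alt]; lra. Qed.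

Lemma q_bounds : - a < q <= 1 - a.
Proof.
  pose proof (exp_pos q).
  assert (exp q < 1) by (rewrite <- exp_0; apply exp_increasing; lra). lra.
Qed.

Lemma beta_eq : phi_lo a = q -> phi_hi a = p ->
  beta a = / 2 * RInt_gen g (at_right q) (at_left p).
Proof. intros Hlo Hhi. unfold beta. rewrite Hlo, Hhi. reflexivity. Qed.

Lemma crude_ratio : - q / 2 <= (1 + a) * (1 - exp (q / 2)).
Proof.
  pose proof (exp_ineq1_le (- q / 2)). pose proof (exp_pos (q / 2)). pose proof q_bounds.
  assert (exp (q / 2) * exp (- q / 2) = 1) by (rewrite <- exp_plus, <- exp_0; f_equal; field).
  nra.
Qed.

Lemma crude_left_far (x : R) : q < x <= q / 2 -> RInt g x (q / 2) <= 2 * sqrt (1 + a).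
Proof.
  intros Hx. set (c := 1 - exp (q / 2)).
  assert (Hc : 0 < c) by (unfold c; rewrite <- exp_0 at 1; pose proof (exp_increasing (q / 2) 0); lra).
  set (K := sqrt c). assert (HK : 0 < K) by (apply sqrt_lt_R0, Hc).
  assert (HK2 : K * K = c) by (apply sqrt_sqrt; lra).
  eapply Rle_trans.
  - apply (RInt_le_of_derive q p g) with
      (G := fun t => 2 * sqrt (t - q) / K) (h := fun t => / sqrt ((t - q) * (K * K)));
      [exact g_cont|lra|lra|lra| |].
    + intros t Ht. apply is_derive_sqrt_sub; lra.
    + intros t Ht. rewrite HK2. apply g_le_inv_sqrt; [nra|].
      eapply Rle_trans; [|apply a_sub_f_ge_left; lra].
      apply Rmult_le_compat_l; [lra|].
      assert (exp t <= exp (q / 2)) by (apply exp_le_exp_compat; lra). unfold c. lra.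
  - replace (q / 2 - q) with (- q / 2) by field.
    assert (0 <= 2 * sqrt (x - q) / K)
      by (apply Rmult_le_pos; [pose proof (sqrt_pos (x - q)); lra|left; apply Rinv_0_lt_compat; lra]).
    pose proof (sqrt_div_sqrt_le (- q / 2) c (1 + a) Hc ltac:(lra) crude_ratio).
    unfold K, Rdiv in *. lra.
Qed.

Lemma crude_left_near : RInt g (q / 2) 0 <= sqrt (1 + a).
Proof.
  set (u := - q / 2). set (c := 1 - exp (q / 2)).
  assert (Hu : 0 < u) by (unfold u; lra).
  assert (Hc : 0 < c) by (unfold c; rewrite <- exp_0 at 1; pose proof (exp_increasing (q / 2) 0); lra).
  eapply Rle_trans.
  - apply (RInt_le_of_derive q p g) with
      (G := fun t => t * / sqrt (u * c)) (h := fun _ => / sqrt (u * c));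
      [exact g_cont|lra|lra|lra| |].
    + intros t Ht. apply is_derive_scal_id.
    + intros t Ht. apply g_le_inv_sqrt; [nra|].
      pose proof (f_antitone_neg (q / 2) t ltac:(lra)).
      pose proof (a_sub_f_ge_left (q / 2) ltac:(lra)).
      replace (q / 2 - q) with u in * by (unfold u; field). unfold c in *. lra.
  - rewrite sqrt_mult by lra.
    replace (0 * / (sqrt u * sqrt c) - q / 2 * / (sqrt u * sqrt c)) with (sqrt u / sqrt c).
    + apply sqrt_div_sqrt_le; [lra|lra|exact crude_ratio].
    + assert (Hsu : 0 < sqrt u) by (apply sqrt_lt_R0, Hu).
      assert (0 < sqrt c) by (apply sqrt_lt_R0, Hc).
      replace (q / 2) with (- (sqrt u * sqrt u)) by (rewrite sqrt_sqrt; unfold u; lra).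
      field. lra.
Qed.

Lemma crude_right_near : RInt g 0 (p / 2) <= 1.
Proof.
  eapply Rle_trans.
  - apply (RInt_le_of_derive q p g) with
      (G := fun t => t * / sqrt ((p / 2) * (p / 2))) (h := fun _ => / sqrt ((p / 2) * (p / 2)));
      [exact g_cont|lra|lra|lra| |].
    + intros t Ht. apply is_derive_scal_id.
    + intros t Ht. apply g_le_inv_sqrt; [nra|].
      pose proof (f_monotone_pos t (p / 2) ltac:(lra)).
      pose proof (a_sub_f_ge_right (p / 2) ltac:(lra)).
      pose proof (exp_ineq1_le (p / 2)). nra.
  - rewrite sqrt_square by lra. apply Req_le. field. lra.
Qed.

Lemma crude_right_far (y : R) : p / 2 <= y < p -> RInt g (p / 2) y <= 2.
Proof.
  intros Hy. set (K := sqrt (p / 2)).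
  assert (HK : 0 < K) by (apply sqrt_lt_R0; lra).
  assert (HK2 : K * K = p / 2) by (apply sqrt_sqrt; lra).
  eapply Rle_trans.
  - apply (RInt_le_of_derive q p g) with
      (G := fun t => - (2 * sqrt (p - t) / K)) (h := fun t => / sqrt ((p - t) * (K * K)));
      [exact g_cont|lra|lra|lra| |].
    + intros t Ht. apply is_derive_sqrt_sub'; lra.
    + intros t Ht. apply g_le_inv_sqrt; [nra|].
      eapply Rle_trans; [|apply a_sub_f_ge_right; lra].
      pose proof (exp_ineq1_le t). nra.
  - replace (p - p / 2) with (K * K) by lra. rewrite sqrt_square by lra.
    assert (0 <= 2 * sqrt (p - y) / K)
      by (apply Rmult_le_pos; [pose proof (sqrt_pos (p - y)); lra|left; apply Rinv_0_lt_compat; lra]).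
    replace (2 * K / K) with 2 by (field; lra). lra.
Qed.

Lemma inner_bound_crude : inner_bound q p g (3 + 3 * sqrt (1 + a)).
Proof.
  intros x y Hx Hxy Hy.
  set (x' := Rmin x (q / 2)). set (y' := Rmax y (p / 2)).
  assert (Hx' : q < x' <= q / 2) by (unfold x'; split; [apply Rmin_glb_lt|apply Rmin_r]; lra).
  assert (Hy' : p / 2 <= y' < p) by (unfold y'; split; [apply Rmax_r|apply Rmax_lub_lt]; lra).
  assert (x' <= x) by apply Rmin_l. assert (y <= y') by apply Rmax_l.
  apply Rle_trans with (RInt g x' y').
  { apply (RInt_inner_mono q p g g_cont g_nonneg); lra. }
  rewrite (RInt_inner_Chasles q p g g_cont x' (q / 2) y'), (RInt_inner_Chasles q p g g_cont (q / 2) 0 y'),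
    (RInt_inner_Chasles q p g g_cont 0 (p / 2) y') by lra.
  pose proof (crude_left_far x' Hx'). pose proof crude_left_near.
  pose proof crude_right_near. pose proof (crude_right_far y' Hy'). lra.
Qed.

Section Asymptotics.

Hypothesis Hbig : 1000 <= p.

Let s : R := sqrt (exp p).
Let w (t : R) : R := sqrt (1 - exp (t - p)).

(* [g_lo <= g <= g_hi] on [[0, p)] come from [a - f t = s^2 w^2 - (p - t)] expanded to second
   order in [(p - t) / (s w)^2]; their primitives use [(ln (1 - w) - ln (1 + w))' = 1 / w]. *)
Let prim_w (t : R) : R := ln (1 - w t) - ln (1 + w t).

Let g_lo (t : R) : R := / s * / w t + (p - t) / (2 * s ^ 3).
Let G_lo (t : R) : R := / s * prim_w t - (p - t) ^ 2 / (4 * s ^ 3).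
Let c_hi : R := / s + (1 + p) ^ 2 / s ^ 5.
Let g_hi (t : R) : R := c_hi * / w t +
  / (2 * s ^ 3) * ((p - t) + (p - t) * exp (t - p) / w t + (p - t) * exp (t - p) / w t ^ 3).
Let G_hi (t : R) : R := c_hi * prim_w t +
  / (2 * s ^ 3) * (- (p - t) ^ 2 / 2 - 2 * w t * (p - t) - 4 * w t + 2 * (p - t) / w t).

Lemma s_sq : s ^ 2 = exp p.
Proof. unfold s. rewrite <- Rsqr_pow2. apply Rsqr_sqrt. left; apply exp_pos. Qed.

Lemma s_pos : 0 < s.
Proof. apply sqrt_lt_R0, exp_pos. Qed.

Lemma a_eq : a = s ^ 2 - p.
Proof. rewrite s_sq. lra. Qed.

Lemma s_sq_large : p ^ 4 / 4 <= s ^ 2.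
Proof. rewrite s_sq. apply quartic_le_exp, Hbig. Qed.

Lemma s_sq_huge : 250000000000 <= s ^ 2.
Proof.
  pose proof s_sq_large.
  assert (1000 ^ 4 <= p ^ 4) by (apply pow_incr; lra). lra.
Qed.

Lemma s_large : 1000 <= s.
Proof. pose proof s_sq_huge. pose proof s_pos. nra. Qed.

Lemma cubic_le_s_sq : (1 + p) ^ 2 * (p + 2) <= s ^ 2.
Proof.
  pose proof s_sq_large.
  assert (1000 * (p * p) <= p * (p * p)) by nra.
  assert (1000 * (p * (p * p)) <= p * (p * (p * p))) by nra.
  replace (p ^ 4) with (p * (p * (p * p))) in * by ring. nra.
Qed.

Lemma a_ge_half_s_sq : s ^ 2 / 2 <= a.
Proof. pose proof cubic_le_s_sq. pose proof a_eq. nra. Qed.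

Lemma exp_neg_half_a_small : 4 * s ^ 4 * exp (- a / 2) <= 1.
Proof.
  pose proof s_sq_huge. pose proof cubic_le_s_sq. pose proof a_eq.
  assert (8 * (s ^ 2) ^ 3 <= exp (a / 2)) by (apply cube_le_exp; nra).
  assert (exp (- a / 2) * exp (a / 2) = 1) by (rewrite <- exp_plus, <- exp_0; f_equal; field).
  pose proof (exp_pos (- a / 2)). assert (1 <= s ^ 2) by nra. nra.
Qed.

Lemma exp_q_small : 8 * s ^ 6 * exp q <= 1.
Proof.
  pose proof s_sq_huge. pose proof cubic_le_s_sq. pose proof a_eq. pose proof q_bounds.
  assert (8 * (s ^ 2) ^ 3 <= exp (a - 1)) by (apply cube_le_exp; nra).
  assert (exp q <= exp (1 - a)) by (apply exp_le_exp_compat; lra).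
  assert (exp (1 - a) * exp (a - 1) = 1) by (rewrite <- exp_plus, <- exp_0; f_equal; ring).
  pose proof (exp_pos (1 - a)). pose proof (exp_pos q).
  replace (s ^ 6) with ((s ^ 2) ^ 3) by ring. nra.
Qed.

Lemma w_spec (t : R) : t < p -> 0 < w t < 1 /\ w t * w t = 1 - exp (t - p).
Proof.
  intros Ht. unfold w.
  assert (exp (t - p) < 1) by (rewrite <- exp_0; apply exp_increasing; lra).
  pose proof (exp_pos (t - p)).
  split; [split|].
  - apply sqrt_lt_R0; lra.
  - rewrite <- sqrt_1 at 2. apply sqrt_lt_1_alt. lra.
  - apply sqrt_sqrt. lra.
Qed.

Lemma a_sub_f_eq (t : R) : t < p -> a - f t = s ^ 2 * (w t * w t) - (p - t).
Proof.
  intros Ht. destruct (w_spec t Ht) as [_ ->]. rewrite a_eq, s_sq. unfold f.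
  replace (exp t) with (exp p * exp (t - p)) by (rewrite <- exp_plus; f_equal; ring). ring.
Qed.

Lemma w_sq_lower (t : R) : t < p -> p - t <= (1 + (p - t)) * (w t * w t).
Proof.
  intros Ht. destruct (w_spec t Ht) as [_ ->].
  assert (exp (t - p) * exp (p - t) = 1) by (rewrite <- exp_plus, <- exp_0; f_equal; ring).
  pose proof (exp_ineq1_le (p - t)). pose proof (exp_pos (t - p)). nra.
Qed.

Lemma is_derive_G_lo (t : R) : t < p -> is_derive G_lo t (g_lo t).
Proof.
  intros Ht. destruct (w_spec t Ht) as [Hw Hw2]. pose proof s_pos.
  assert (exp (t - p) < 1) by (rewrite <- exp_0; apply exp_increasing; lra).
  unfold G_lo, g_lo, prim_w, w in *. auto_derive.
  - change (t + - p) with (t - p). change (1 + - exp (t - p)) with (1 - exp (t - p)).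
    repeat split; lra.
  - change (t + - p) with (t - p). change (1 + - exp (t - p)) with (1 - exp (t - p)).
    set (W := sqrt (1 - exp (t - p))) in *. change (1 + - W) with (1 - W).
    replace (exp (t - p)) with (1 - W * W) by lra. field. repeat split; lra.
Qed.

Lemma is_derive_G_hi (t : R) : t < p -> is_derive G_hi t (g_hi t).
Proof.
  intros Ht. destruct (w_spec t Ht) as [Hw Hw2]. pose proof s_pos.
  assert (exp (t - p) < 1) by (rewrite <- exp_0; apply exp_increasing; lra).
  unfold G_hi, g_hi, c_hi, prim_w, w in *. auto_derive.
  - change (t + - p) with (t - p). change (1 + - exp (t - p)) with (1 - exp (t - p)).
    repeat split; lra.
  - change (t + - p) with (t - p). change (1 + - exp (t - p)) with (1 - exp (t - p)).
    set (W := sqrt (1 - exp (t - p))) in *. change (1 + - W) with (1 - W). change (p + - t) with (p - t).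
    replace (exp (t - p)) with (1 - W * W) by lra. field. repeat split; lra.
Qed.

Lemma g_lo_le_g (t : R) : 0 <= t < p -> g_lo t <= g t.
Proof.
  intros Ht. destruct (w_spec t (proj2 Ht)) as [Hw _].
  pose proof (a_sub_f_pos t ltac:(lra)).
  apply inv_sqrt_sub_lower; [lra|lra|apply s_pos|apply sqrt_lt_R0; lra|].
  rewrite sqrt_sqrt by lra. apply a_sub_f_eq. lra.
Qed.

Lemma g_le_g_hi (t : R) : 0 <= t < p -> g t <= g_hi t.
Proof.
  intros Ht. destruct (w_spec t (proj2 Ht)) as [Hw Hw2].
  pose proof (a_sub_f_pos t ltac:(lra)). pose proof cubic_le_s_sq.
  apply inv_sqrt_sub_upper; try lra; [apply s_pos|apply w_sq_lower; lra|apply sqrt_lt_R0; lra| |nra].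
  rewrite sqrt_sqrt by lra. apply a_sub_f_eq. lra.
Qed.

Lemma prim_w_nonpos (t : R) : t < p -> prim_w t <= 0.
Proof.
  intros Ht. destruct (w_spec t Ht) as [Hw _].
  unfold prim_w. assert (ln (1 - w t) <= ln (1 + w t)) by (apply ln_le; lra). lra.
Qed.

Lemma prim_w_lower (t : R) : t < p -> w t <= 1/2 -> - 4 * w t <= prim_w t.
Proof.
  intros Ht Hw'. destruct (w_spec t Ht) as [Hw _].
  assert (Hln : ln ((1 + w t) * / (1 - w t)) <= (1 + w t) * / (1 - w t) - 1)
    by (apply ln_le_sub1, Rmult_lt_0_compat; [|apply Rinv_0_lt_compat]; lra).
  rewrite ln_mult, ln_Rinv in Hln by (try apply Rinv_0_lt_compat; lra).
  replace ((1 + w t) * / (1 - w t) - 1) with (2 * w t / (1 - w t)) in Hln by (field; lra).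
  assert (2 * w t / (1 - w t) <= 4 * w t).
  { apply (Rmult_le_reg_r (1 - w t)); [lra|].
    replace (2 * w t / (1 - w t) * (1 - w t)) with (2 * w t) by (field; lra). nra. }
  unfold prim_w. lra.
Qed.

Lemma prim_w_0 : prim_w 0 = - p - 2 * ln (1 + w 0).
Proof.
  destruct (w_spec 0 Hp) as [Hw Hw2].
  assert (ln (1 - w 0) + ln (1 + w 0) = - p).
  { rewrite <- ln_mult by lra.
    replace ((1 - w 0) * (1 + w 0)) with (exp (- p)) by (rewrite Rminus_0_l in Hw2; nra).
    apply ln_exp. }
  unfold prim_w. lra.
Qed.

Lemma w_0_bounds : 0 < w 0 <= 1 /\ ln 2 - / s ^ 2 <= ln (1 + w 0) <= ln 2.
Proof.
  destruct (w_spec 0 Hp) as [Hw Hw2].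
  assert (Hgap : 1 - w 0 <= / s ^ 2).
  { replace (/ s ^ 2) with (exp (0 - p)) by (rewrite s_sq, <- exp_Ropp; f_equal; ring). nra. }
  split; [lra|split; [|apply ln_le; lra]].
  assert (Hln : ln (2 * / (1 + w 0)) <= 2 * / (1 + w 0) - 1)
    by (apply ln_le_sub1, Rmult_lt_0_compat; [|apply Rinv_0_lt_compat]; lra).
  rewrite ln_mult, ln_Rinv in Hln by (try apply Rinv_0_lt_compat; lra).
  replace (2 * / (1 + w 0) - 1) with ((1 - w 0) / (1 + w 0)) in Hln by (field; lra).
  assert ((1 - w 0) / (1 + w 0) <= 1 - w 0).
  { apply (Rmult_le_reg_r (1 + w 0)); [lra|].
    replace ((1 - w 0) / (1 + w 0) * (1 + w 0)) with (1 - w 0) by (field; lra). nra. }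
  lra.
Qed.

Lemma c_hi_pos : 0 < c_hi.
Proof.
  pose proof s_pos. unfold c_hi.
  assert (0 < / s) by (apply Rinv_0_lt_compat; lra).
  assert (0 <= (1 + p) ^ 2 / s ^ 5)
    by (apply Rmult_le_pos; [apply pow2_ge_0|left; apply Rinv_0_lt_compat, pow_lt; lra]).
  lra.
Qed.

Lemma G_hi_near_p (y : R) : p - 1/2 <= y < p -> G_hi y <= / s ^ 3.
Proof.
  intros Hy. destruct (w_spec y (proj2 Hy)) as [Hw Hw2].
  pose proof (prim_w_nonpos y (proj2 Hy)). pose proof c_hi_pos. pose proof s_pos.
  pose proof (w_sq_lower y (proj2 Hy)).
  set (x := p - y) in *.
  assert (Hx0 : 0 <= x <= 1/2) by (unfold x; lra).
  assert (Hxw : x <= w y).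
  { apply Rsqr_incr_0_var; [unfold Rsqr|lra].
    assert (x * x <= x * ((1 + x) * (w y * w y))) by (apply Rmult_le_compat_l; lra).
    assert (x * (1 + x) <= 1) by nra. nra. }
  assert (2 * x / w y <= 2).
  { apply (Rmult_le_reg_r (w y)); [lra|].
    replace (2 * x / w y * w y) with (2 * x) by (field; lra). lra. }
  assert (Hbr : - x ^ 2 / 2 - 2 * w y * x - 4 * w y + 2 * x / w y <= 2)
    by (assert (0 <= x ^ 2) by apply pow2_ge_0; nra).
  assert (0 < / (2 * s ^ 3)) by (apply Rinv_0_lt_compat, Rmult_lt_0_compat, pow_lt; lra).
  unfold G_hi. fold x.
  assert (c_hi * prim_w y <= 0) by nra.
  apply Rmult_le_compat_l with (r := / (2 * s ^ 3)) in Hbr; [|lra].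
  replace (/ (2 * s ^ 3) * 2) with (/ s ^ 3) in Hbr by (field; lra). lra.
Qed.

Lemma G_hi_0 : - G_hi 0 <= (p + 2 * ln 2) / s + p ^ 2 / (4 * s ^ 3) + 3 / s ^ 3.
Proof.
  destruct w_0_bounds as [HY [HY1 HY2]].
  pose proof s_pos. pose proof cubic_le_s_sq. pose proof ln2_bounds.
  assert (Hs3 : 0 < s ^ 3) by (apply pow_lt; lra).
  set (Y := w 0) in *. set (M := p + 2 * ln (1 + Y)).
  assert (HM : 0 <= M <= p + 2 * ln 2).
  { assert (0 <= ln (1 + Y)) by (rewrite <- ln_1; apply ln_le; lra). unfold M; lra. }
  unfold G_hi. rewrite prim_w_0. fold Y. rewrite Rminus_0_r.
  replace (- p - 2 * ln (1 + Y)) with (- M) by (unfold M; ring).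
  assert (Hc : c_hi * M <= M / s + / s ^ 3).
  { unfold c_hi. rewrite Rmult_plus_distr_r.
    assert ((1 + p) ^ 2 * M <= s ^ 2)
      by (assert ((1 + p) ^ 2 * M <= (1 + p) ^ 2 * (p + 2)) by (apply Rmult_le_compat_l; [apply pow2_ge_0|lra]); lra).
    assert ((1 + p) ^ 2 / s ^ 5 * M <= s ^ 2 / s ^ 5)
      by (unfold Rdiv; rewrite Rmult_assoc, (Rmult_comm (/ s ^ 5)), <- Rmult_assoc;
          apply Rmult_le_compat_r; [left; apply Rinv_0_lt_compat, pow_lt|]; lra).
    replace (s ^ 2 / s ^ 5) with (/ s ^ 3) in * by (field; lra).
    unfold Rdiv. lra. }
  assert (Hbr : - (- p ^ 2 / 2 - 2 * Y * p - 4 * Y + 2 * p / Y) <= p ^ 2 / 2 + 4).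
  { assert (Y * p <= p / Y); [|lra].
    apply (Rmult_le_reg_r Y); [lra|].
    replace (p / Y * Y) with p by (field; lra).
    assert (Y * Y <= 1) by nra. replace (Y * p * Y) with (Y * Y * p) by ring. nra. }
  assert (0 < / (2 * s ^ 3)) by (apply Rinv_0_lt_compat; lra).
  apply Rmult_le_compat_l with (r := / (2 * s ^ 3)) in Hbr; [|lra].
  replace (/ (2 * s ^ 3) * (p ^ 2 / 2 + 4)) with (p ^ 2 / (4 * s ^ 3) + 2 / s ^ 3) in Hbr by (field; lra).
  assert (M / s <= (p + 2 * ln 2) / s)
    by (apply Rmult_le_compat_r; [left; apply Rinv_0_lt_compat|]; lra).
  replace (3 / s ^ 3) with (/ s ^ 3 + 2 / s ^ 3) by (field; lra).
  lra.
Qed.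

Lemma RInt_right_upper (y : R) : p - 1/2 <= y < p ->
  RInt g 0 y <= (p + 2 * ln 2) / s + p ^ 2 / (4 * s ^ 3) + 4 / s ^ 3.
Proof.
  intros Hy.
  assert (HI : RInt g 0 y <= G_hi y - G_hi 0).
  { apply (RInt_le_of_derive q p g g_cont 0 y G_hi g_hi); try lra.
    - intros t Ht. apply is_derive_G_hi. lra.
    - intros t Ht. apply g_le_g_hi. lra. }
  pose proof (G_hi_near_p y Hy). pose proof G_hi_0. pose proof s_pos.
  replace (4 / s ^ 3) with (/ s ^ 3 + 3 / s ^ 3) by (field; lra). lra.
Qed.

Let y_hi : R := p - / (16 * s ^ 4).

Lemma y_hi_bounds : p - 1/2 <= y_hi < p.
Proof.
  pose proof s_large. unfold y_hi.
  assert (Hs4 : 1 <= s ^ 4) by (replace 1 with (1 ^ 4) by ring; apply pow_incr; lra).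
  assert (0 < / (16 * s ^ 4)) by (apply Rinv_0_lt_compat; lra).
  assert (/ (16 * s ^ 4) <= / 2) by (apply Rinv_le_contravar; lra). lra.
Qed.

Lemma G_lo_y_hi : - (2 / s ^ 3) <= G_lo y_hi.
Proof.
  pose proof y_hi_bounds as Hy. pose proof s_large.
  destruct (w_spec y_hi (proj2 Hy)) as [Hw Hw2].
  assert (Hs4 : 1 <= s ^ 4) by (replace 1 with (1 ^ 4) by ring; apply pow_incr; lra).
  assert (Hgap : p - y_hi = / (16 * s ^ 4)) by (unfold y_hi; ring).
  assert (Hwy : w y_hi <= / (4 * s ^ 2)).
  { apply Rsqr_incr_0_var; [unfold Rsqr|left; apply Rinv_0_lt_compat, Rmult_lt_0_compat, pow_lt; lra].
    replace (/ (4 * s ^ 2) * / (4 * s ^ 2)) with (/ (16 * s ^ 4)) by (field; lra).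
    rewrite Hw2, <- Hgap. pose proof (exp_ineq1_le (y_hi - p)). lra. }
  assert (/ (4 * s ^ 2) <= 1/2)
    by (replace (1/2) with (/ 2) by field; apply Rinv_le_contravar; nra).
  pose proof (prim_w_lower y_hi (proj2 Hy) ltac:(lra)).
  assert (Hprim : / s * (- 4 * w y_hi) >= - (1 / s ^ 3)).
  { assert (4 * w y_hi <= / s ^ 2)
      by (replace (/ s ^ 2) with (4 * / (4 * s ^ 2)) by (field; lra); lra).
    assert (/ s * (4 * w y_hi) <= / s * / s ^ 2)
      by (apply Rmult_le_compat_l; [left; apply Rinv_0_lt_compat|]; lra).
    replace (/ s * / s ^ 2) with (1 / s ^ 3) in * by (field; lra). lra. }
  assert (Hsq : (p - y_hi) ^ 2 / (4 * s ^ 3) <= 1 / s ^ 3).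
  { rewrite Hgap. apply Rmult_le_compat; try lra.
    - apply pow2_ge_0.
    - left; apply Rinv_0_lt_compat, Rmult_lt_0_compat, pow_lt; lra.
    - assert (0 < / (16 * s ^ 4) <= 1); [|nra].
      split; [apply Rinv_0_lt_compat; lra|].
      pose proof (Rinv_le_contravar 1 (16 * s ^ 4) ltac:(lra) ltac:(lra)). rewrite Rinv_1 in *. lra.
    - apply Rinv_le_contravar; [apply pow_lt; lra|]. assert (0 < s ^ 3) by (apply pow_lt; lra). lra. }
  assert (/ s * prim_w y_hi >= / s * (- 4 * w y_hi))
    by (apply Rle_ge, Rmult_le_compat_l; [left; apply Rinv_0_lt_compat|]; lra).
  unfold G_lo. unfold Rdiv in *. lra.
Qed.

Lemma G_lo_0 : (p + 2 * ln 2) / s + p ^ 2 / (4 * s ^ 3) - 2 / s ^ 3 <= - G_lo 0.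
Proof.
  destruct w_0_bounds as [_ [HY1 _]]. pose proof s_large.
  unfold G_lo. rewrite prim_w_0, Rminus_0_r.
  replace (- (/ s * (- p - 2 * ln (1 + w 0)) - p ^ 2 / (4 * s ^ 3)))
    with ((p + 2 * ln (1 + w 0)) / s + p ^ 2 / (4 * s ^ 3)) by (field; lra).
  assert ((p + 2 * ln 2 - 2 / s ^ 2) / s <= (p + 2 * ln (1 + w 0)) / s)
    by (apply Rmult_le_compat_r; [left; apply Rinv_0_lt_compat|unfold Rdiv]; lra).
  replace ((p + 2 * ln 2 - 2 / s ^ 2) / s) with ((p + 2 * ln 2) / s - 2 / s ^ 3) in * by (field; lra).
  lra.
Qed.

Lemma RInt_right_lower :
  (p + 2 * ln 2) / s + p ^ 2 / (4 * s ^ 3) - 4 / s ^ 3 <= RInt g 0 y_hi.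
Proof.
  pose proof y_hi_bounds as Hy.
  assert (HI : G_lo y_hi - G_lo 0 <= RInt g 0 y_hi).
  { apply (RInt_ge_of_derive q p g g_cont 0 y_hi G_lo g_lo); try lra.
    - intros t Ht. apply is_derive_G_lo. lra.
    - intros t Ht. apply g_lo_le_g. lra. }
  pose proof G_lo_y_hi. pose proof G_lo_0. pose proof s_pos.
  replace (4 / s ^ 3) with (2 / s ^ 3 + 2 / s ^ 3) by (field; lra). lra.
Qed.

Let x_lo : R := q + exp q.

Lemma RInt_left_lower : q < x_lo <= 0 /\ 2 * sqrt a - / s ^ 3 <= RInt g x_lo 0.
Proof.
  pose proof exp_q_small. pose proof s_sq_huge. pose proof s_pos. pose proof a_ge_half_s_sq.
  pose proof (exp_pos q). pose proof q_bounds.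
  assert (Hx : q < x_lo <= 0).
  { unfold x_lo. assert (exp q < 1) by (rewrite <- exp_0; apply exp_increasing; lra). lra. }
  split; [exact Hx|].
  assert (HI : 2 * sqrt (0 - - a) / 1 - 2 * sqrt (x_lo - - a) / 1 <= RInt g x_lo 0).
  { apply (RInt_ge_of_derive q p g g_cont x_lo 0 (fun t => 2 * sqrt (t - - a) / 1) (fun t => / sqrt ((t - - a) * (1 * 1)))); try lra.
    - intros t Ht. apply is_derive_sqrt_sub; lra.
    - intros t Ht. apply inv_sqrt_le_g; [apply a_sub_f_pos; lra|].
      unfold f. pose proof (exp_pos t). lra. }
  replace (0 - - a) with a in HI by ring.
  replace (x_lo - - a) with (2 * exp q) in HI by (unfold x_lo; lra).
  assert (Hs3 : 0 < s ^ 3) by (apply pow_lt; lra).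
  assert (sqrt (2 * exp q) <= / (2 * s ^ 3)).
  { apply Rsqr_incr_0_var; [unfold Rsqr|left; apply Rinv_0_lt_compat; lra].
    rewrite sqrt_sqrt by lra.
    replace (/ (2 * s ^ 3) * / (2 * s ^ 3)) with (/ (4 * s ^ 6)) by (field; lra).
    assert (0 < s ^ 6) by (apply pow_lt; lra).
    apply (Rmult_le_reg_r (4 * s ^ 6)); [lra|].
    rewrite Rinv_l by lra. lra. }
  replace (/ s ^ 3) with (2 * / (2 * s ^ 3)) by (field; lra). lra.
Qed.

Lemma RInt_left_far (x : R) : q < x <= - a / 2 -> RInt g x (- a / 2) <= 2 * sqrt (a / 2) + / s ^ 3.
Proof.
  intros Hx. pose proof q_bounds. pose proof s_large.
  set (eps := exp (- a / 2)). assert (Heps0 : 0 < eps) by apply exp_pos.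
  assert (Heps4 : 4 * s ^ 4 * eps <= 1) by apply exp_neg_half_a_small.
  assert (Hs4 : 1000 <= s ^ 4) by (replace (s ^ 4) with (s * s ^ 3) by ring;
    assert (1 <= s ^ 3) by (replace 1 with (1 ^ 3) by ring; apply pow_incr; lra); nra).
  assert (Heps : eps <= 1/2) by nra.
  set (K := sqrt (1 - eps)). assert (HK : 0 < K) by (apply sqrt_lt_R0; lra).
  assert (HK2 : K * K = 1 - eps) by (apply sqrt_sqrt; lra).
  assert (HI : RInt g x (- a / 2) <= 2 * sqrt (- a / 2 - q) / K - 2 * sqrt (x - q) / K).
  { apply (RInt_le_of_derive q p g g_cont x (- a / 2) (fun t => 2 * sqrt (t - q) / K) (fun t => / sqrt ((t - q) * (K * K)))); try lra.
    - intros t Ht. apply is_derive_sqrt_sub; lra.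
    - intros t Ht. rewrite HK2. apply g_le_inv_sqrt; [nra|].
      eapply Rle_trans; [|apply a_sub_f_ge_left; lra].
      apply Rmult_le_compat_l; [lra|].
      assert (exp t <= eps) by (apply exp_le_exp_compat; lra). lra. }
  assert (0 <= 2 * sqrt (x - q) / K)
    by (apply Rmult_le_pos; [pose proof (sqrt_pos (x - q)); lra|left; apply Rinv_0_lt_compat; lra]).
  set (b := sqrt (a / 2)).
  assert (Hb : 0 < b) by (apply sqrt_lt_R0; lra).
  assert (Hbq : sqrt (- a / 2 - q) <= b) by (apply sqrt_le_1_alt; lra).
  assert (HKi : / K <= 1 + eps).
  { apply (Rmult_le_reg_r K); [lra|]. rewrite Rinv_l by lra.
    assert (K <= 1) by nra. nra. }
  assert (HbK : sqrt (- a / 2 - q) / K <= b * (1 + eps)).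
  { apply Rmult_le_compat; try lra; [apply sqrt_pos|left; apply Rinv_0_lt_compat; lra]. }
  assert (Hbs : b <= s).
  { apply Rsqr_incr_0_var; [unfold Rsqr, b|lra]. rewrite sqrt_sqrt by lra.
    pose proof a_eq. nra. }
  assert (Hsmall : 2 * b * eps <= / s ^ 3).
  { assert (Hs3 : 0 < s ^ 3) by (apply pow_lt; lra).
    apply (Rmult_le_reg_r (s ^ 3)); [lra|]. rewrite Rinv_l by lra.
    assert (b * eps * s ^ 3 <= s * eps * s ^ 3)
      by (apply Rmult_le_compat_r; [lra|apply Rmult_le_compat_r; lra]).
    replace (4 * s ^ 4 * eps) with (4 * (s * eps * s ^ 3)) in * by ring.
    assert (0 <= s * eps * s ^ 3) by (apply Rmult_le_pos; [apply Rmult_le_pos|]; lra).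
    lra. }
  unfold Rdiv in *. lra.
Qed.

(* On [[-a/2, 0]], [a - f t = (a + t) - exp t] with [exp t <= 1] small against [a]. *)
Lemma g_le_near_zero (t : R) : - a / 2 <= t <= 0 ->
  g t <= / sqrt (t + a) + 4 * exp t / sqrt a ^ 3.
Proof.
  intros Ht. pose proof q_bounds. pose proof (exp_pos t).
  pose proof a_ge_half_s_sq. pose proof s_sq_huge.
  assert (HG : 0 < a - f t) by (apply a_sub_f_pos; lra).
  assert (Hexp : exp t <= 1) by (rewrite <- exp_0; apply exp_le_exp_compat; lra).
  assert (HGa : a / 4 <= a - f t) by (unfold f; lra).
  set (v := sqrt (a - f t)). set (u := sqrt (t + a)). set (sa := sqrt a).
  assert (Hv : 0 < v) by (apply sqrt_lt_R0; lra).
  assert (Hv2 : v * v = a - f t) by (apply sqrt_sqrt; lra).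
  assert (Hu2 : u * u = t + a) by (apply sqrt_sqrt; lra).
  assert (Hsa : 0 < sa) by (apply sqrt_lt_R0; lra).
  assert (Hsa2 : sa * sa = a) by (apply sqrt_sqrt; lra).
  assert (Hvu : v <= u).
  { apply Rsqr_incr_0_var; [unfold Rsqr; rewrite Hv2, Hu2; unfold f; lra|apply sqrt_pos]. }
  pose proof (inv_sub_inv_le u v Hv Hvu) as Hdiff.
  replace (u * u - v * v) with (exp t) in Hdiff by (rewrite Hu2, Hv2; unfold f; ring).
  assert (Hvs : sa / 2 <= v) by (apply Rsqr_incr_0_var; unfold Rsqr; lra).
  assert (sa ^ 3 / 8 <= v ^ 3) by (replace (sa ^ 3 / 8) with ((sa / 2) ^ 3) by field; apply pow_incr; lra).
  assert (0 < sa ^ 3) by (apply pow_lt; lra).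
  assert (exp t / (2 * v ^ 3) <= 4 * exp t / sa ^ 3).
  { replace (4 * exp t / sa ^ 3) with (exp t * / (sa ^ 3 / 4)) by (field; lra).
    apply Rmult_le_compat_l; [lra|]. apply Rinv_le_contravar; lra. }
  unfold g. fold v. lra.
Qed.

Lemma RInt_left_near : RInt g (- a / 2) 0 <= 2 * sqrt a - 2 * sqrt (a / 2) + 32 / s ^ 3.
Proof.
  pose proof q_bounds. pose proof s_pos. pose proof a_ge_half_s_sq. pose proof s_sq_huge.
  set (sa := sqrt a).
  assert (Hsa : 0 < sa) by (apply sqrt_lt_R0; lra).
  assert (Hsa3 : 0 < sa ^ 3) by (apply pow_lt; lra).
  assert (HI : RInt g (- a / 2) 0 <=
     (2 * sqrt (0 - - a) / 1 + 4 * exp 0 / sa ^ 3) - (2 * sqrt (- a / 2 - - a) / 1 + 4 * exp (- a / 2) / sa ^ 3)).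
  { apply (RInt_le_of_derive q p g g_cont (- a / 2) 0
      (fun t => 2 * sqrt (t - - a) / 1 + 4 * exp t / sa ^ 3)
      (fun t => / sqrt ((t - - a) * (1 * 1)) + 4 * exp t / sa ^ 3)); try lra.
    - intros t Ht. apply (is_derive_plus (fun u => 2 * sqrt (u - - a) / 1) (fun u => 4 * exp u / sa ^ 3)).
      + apply is_derive_sqrt_sub; lra.
      + auto_derive; auto. field. lra.
    - intros t Ht. replace ((t - - a) * (1 * 1)) with (t + a) by ring. apply g_le_near_zero. lra. }
  replace (0 - - a) with a in HI by ring. replace (- a / 2 - - a) with (a / 2) in HI by field.
  rewrite exp_0 in HI.
  assert (0 < 4 * exp (- a / 2) / sa ^ 3)
    by (apply Rmult_lt_0_compat; [pose proof (exp_pos (- a / 2)); lra|apply Rinv_0_lt_compat; lra]).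
  assert (Hsas : s / 2 <= sa).
  { apply Rsqr_incr_0_var; [|lra]. unfold Rsqr, sa. rewrite sqrt_sqrt by lra.
    replace (s / 2 * (s / 2)) with (s ^ 2 / 4) by field. lra. }
  assert (s ^ 3 / 8 <= sa ^ 3) by (replace (s ^ 3 / 8) with ((s / 2) ^ 3) by field; apply pow_incr; lra).
  assert (4 / sa ^ 3 <= 32 / s ^ 3).
  { replace (32 / s ^ 3) with (4 / (s ^ 3 / 8)) by (field; lra).
    assert (0 < s ^ 3) by (apply pow_lt; lra).
    apply Rmult_le_compat_l; [lra|]. apply Rinv_le_contravar; lra. }
  unfold sa, Rdiv in *. lra.
Qed.

Lemma two_sqrt_a_bounds :
  2 * s - p / s - p ^ 2 / (4 * s ^ 3) - p ^ 3 / (4 * s ^ 5) <= 2 * sqrt a <=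
  2 * s - p / s - p ^ 2 / (4 * s ^ 3).
Proof.
  pose proof a_eq. pose proof a_ge_half_s_sq. pose proof s_pos.
  replace a with (s ^ 2 - p) by lra. apply sqrt_sub_expansion; lra.
Qed.

Lemma inner_bound_sharp : inner_bound q p g (2 * s + 2 * ln 2 / s + 37 / s ^ 3).
Proof.
  intros x y Hx Hxy Hy.
  pose proof a_ge_half_s_sq. pose proof s_sq_huge. pose proof s_pos. pose proof q_bounds.
  set (x' := Rmin x (- a / 2)). set (y' := Rmax y (p - 1/2)).
  assert (Hx' : q < x' <= - a / 2) by (unfold x'; split; [apply Rmin_glb_lt|apply Rmin_r]; lra).
  assert (Hy' : p - 1/2 <= y' < p) by (unfold y'; split; [apply Rmax_r|apply Rmax_lub_lt]; lra).
  assert (x' <= x) by apply Rmin_l. assert (y <= y') by apply Rmax_l.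
  apply Rle_trans with (RInt g x' y').
  { apply (RInt_inner_mono q p g g_cont g_nonneg); lra. }
  rewrite (RInt_inner_Chasles q p g g_cont x' (- a / 2) y'),
    (RInt_inner_Chasles q p g g_cont (- a / 2) 0 y') by lra.
  pose proof (RInt_left_far x' Hx'). pose proof RInt_left_near.
  pose proof (RInt_right_upper y' Hy'). pose proof two_sqrt_a_bounds.
  replace (37 / s ^ 3) with (/ s ^ 3 + 32 / s ^ 3 + 4 / s ^ 3) by (field; lra).
  replace (2 * ln 2 / s) with ((p + 2 * ln 2) / s - p / s) by (field; lra).
  lra.
Qed.

Lemma RInt_sharp_lower : 2 * s + 2 * ln 2 / s - 6 / s ^ 3 <= RInt g x_lo y_hi.
Proof.
  pose proof s_pos. pose proof cubic_le_s_sq. pose proof y_hi_bounds.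
  destruct RInt_left_lower as [Hx Hleft].
  rewrite (RInt_inner_Chasles q p g g_cont x_lo 0 y_hi) by lra.
  pose proof RInt_right_lower. pose proof two_sqrt_a_bounds.
  assert (p ^ 3 / (4 * s ^ 5) <= 1 / s ^ 3).
  { assert (p ^ 3 <= 4 * s ^ 2) by nra.
    replace (1 / s ^ 3) with (4 * s ^ 2 / (4 * s ^ 5)) by (field; lra).
    apply Rmult_le_compat_r; [left; apply Rinv_0_lt_compat, Rmult_lt_0_compat, pow_lt|]; lra. }
  replace (6 / s ^ 3) with (/ s ^ 3 + 4 / s ^ 3 + 1 / s ^ 3) by (field; lra).
  replace (2 * ln 2 / s) with ((p + 2 * ln 2) / s - p / s) by (field; lra).
  lra.
Qed.

Lemma beta_expansion : phi_lo a = q -> phi_hi a = p -> Rabs (beta a - (s + ln 2 / s)) <= 19 / s ^ 3.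
Proof.
  intros Hlo Hhi. rewrite (beta_eq Hlo Hhi). pose proof s_pos.
  assert (Hqp : q < p) by lra.
  pose proof (RInt_gen_le q p g Hqp g_cont g_nonneg _ inner_bound_sharp).
  destruct RInt_left_lower as [Hx _]. pose proof y_hi_bounds.
  pose proof (RInt_le_RInt_gen q p g Hqp g_cont g_nonneg _ x_lo y_hi inner_bound_sharp
    ltac:(lra) ltac:(lra) ltac:(lra)).
  pose proof RInt_sharp_lower.
  apply Rabs_le_between'.
  replace (19 / s ^ 3) with (2 * (19 / 2 / s ^ 3)) by (field; lra).
  assert (0 < / s ^ 3) by (apply Rinv_0_lt_compat, pow_lt; lra).
  replace (2 * ln 2 / s) with (2 * (ln 2 / s)) in * by (field; lra).
  unfold Rdiv in *. lra.
Qed.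

Lemma eps_of_bound : phi_lo a = q -> phi_hi a = p -> Rabs (eps_of a) <= 100 / beta a ^ 2.
Proof.
  intros Hlo Hhi. unfold eps_of.
  replace a with (s ^ 2 - ln (s ^ 2)) at 3 by (rewrite s_sq, ln_exp; lra).
  apply eps_expansion_bound; [apply s_large|apply beta_expansion; assumption].
Qed.

End Asymptotics.

Lemma beta_le_crude : phi_lo a = q -> phi_hi a = p -> beta a <= (3 + 3 * sqrt (1 + a)) / 2.
Proof.
  intros Hlo Hhi. rewrite (beta_eq Hlo Hhi).
  pose proof (RInt_gen_le q p g ltac:(lra) g_cont g_nonneg _ inner_bound_crude). lra.
Qed.

End Roots.

Lemma exists_root_nonneg (f0 : R) : 1 < f0 -> exists x, 0 <= x /\ f x = f0.
Proof.
  intros Hf0. set (h := fun x => exp x - x - f0).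
  assert (Hc : continuity h) by (unfold h; reg).
  assert (Hh : 0 < h (2 * f0)).
  { unfold h. replace (exp (2 * f0)) with (exp f0 * exp f0) by (rewrite <- exp_plus; f_equal; ring).
    pose proof (exp_ineq1_le f0). nra. }
  destruct (IVT h 0 (2 * f0) Hc ltac:(lra) ltac:(unfold h; rewrite exp_0; lra) Hh) as [z [Hz Hhz]].
  exists z. unfold h, f in *. split; lra.
Qed.

Lemma exists_root_nonpos (f0 : R) : 1 < f0 -> exists x, x <= 0 /\ f x = f0.
Proof.
  intros Hf0. set (h := fun x => f0 - (exp x - x)).
  assert (Hc : continuity h) by (unfold h; reg).
  assert (Hh : h (- f0) < 0) by (unfold h; pose proof (exp_pos (- f0)); lra).
  destruct (IVT h (- f0) 0 Hc ltac:(lra) Hh ltac:(unfold h; rewrite exp_0; lra)) as [z [Hz Hhz]].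
  exists z. unfold h, f in *. split; lra.
Qed.

Lemma phi_hi_spec (f0 : R) : 1 < f0 -> 0 < phi_hi f0 /\ exp (phi_hi f0) - phi_hi f0 = f0.
Proof.
  intros Hf0.
  destruct (epsilon_spec (inhabits 0) (fun x => 0 <= x /\ f x = f0) (exists_root_nonneg f0 Hf0))
    as [[Hpos | Hzero] Hroot]; fold (phi_hi f0) in *; unfold f in Hroot.
  - split; assumption.
  - rewrite <- Hzero, exp_0 in Hroot. lra.
Qed.

Lemma phi_lo_spec (f0 : R) : 1 < f0 -> phi_lo f0 < 0 /\ exp (phi_lo f0) - phi_lo f0 = f0.
Proof.
  intros Hf0.
  destruct (epsilon_spec (inhabits 0) (fun x => x <= 0 /\ f x = f0) (exists_root_nonpos f0 Hf0))
    as [[Hneg | Hzero] Hroot]; fold (phi_lo f0) in *; unfold f in Hroot.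
  - split; assumption.
  - rewrite Hzero, exp_0 in Hroot. lra.
Qed.

Theorem proposition2p10 :
  exists C B : R, forall f0 : R, 1 < f0 -> B <= beta f0 ->
    Rabs (eps_of f0) <= C / beta f0 ^ 2.
Proof.
  exists 100, ((3 + 3 * sqrt (1 + exp 1000)) / 2 + 1).
  intros f0 Hf0 HB.
  destruct (phi_hi_spec f0 Hf0) as [Hp Hfp]. destruct (phi_lo_spec f0 Hf0) as [Hq Hfq].
  pose proof (beta_le_crude f0 _ _ Hf0 Hp Hq Hfp Hfq eq_refl eq_refl) as Hcrude.
  assert (Hf0_large : exp 1000 < f0).
  { apply Rnot_le_lt. intros Hle.
    assert (sqrt (1 + f0) <= sqrt (1 + exp 1000)) by (apply sqrt_le_1_alt; lra). lra. }
  assert (Hp_large : 1000 <= phi_hi f0) by (left; apply exp_lt_inv; lra).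
  exact (eps_of_bound f0 _ _ Hf0 Hp Hq Hfp Hfq Hp_large eq_refl eq_refl).
Qed.
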